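(* There exists a constant $C>0$, independent of $n$, such that for all sufficiently large $n$, \[ \zeta_n< C+\frac{\min\{1-\beta,\alpha\}}{\lambda_1}\log n . \]
   Context: Fix constants $r_0,d_0\ge 0$ with $\lambda_0:=r_0-d_0<0$, $d_1>0$, $k>1$, $\alpha\in(0,1)$, $\beta\in(0,1)$. Let $f:[0,\infty)^2\to[0,\infty)$ satisfy: (A1) $f$ is Lipschitz continuous; (A2) $f(x,y)=r_1$ when $x+y=0$ and $f(x,y)=d_1$ when $x+y=1$, where $r_1:=f(0,0)>d_1$; (A3) $f(x,y)=\Phi(x+y)$ for some non-increasing function $\Phi:[0,\infty)\to[0,\infty)$; (A4) $f(x,y)\to0$ as $x\to\infty$ and as $y\to\infty$; (A5) $f(x,y)\ge \lambda_1(1-(x+y))+d_1$ for all $x,y\ge0$, where $\lambda_1:=r_1-d_1>0$. Put $\phi(x,y):=f(x,y)-d_1$. For each integer $n\ge1$ let $K=K(n):=kn$ and let $(y_0,y_1,y_\beta)$ solve \[ \dot y_0=\lambda_0 y_0,\qquad \dot y_1=\phi(y_0,y_1)\,y_1+n^{-\alpha}y_0,\qquad \dot y_\beta=\phi(y_0,y_1)\,y_\beta, \] with $(y_0(0),y_1(0),y_\beta(0))=(n/K,\,n^\beta/K,\,n^\beta/K)$. Define the deterministic recurrence time $\zeta_n:=\inf\{t>0: y_1(t)=n/K\}$. *)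

From HB Require Import structures.
From mathcomp Require Import all_boot all_order all_algebra.
From mathcomp Require Import all_classical all_reals all_analysis.
Set Implicit Arguments. Unset Strict Implicit. Unset Printing Implicit Defensive.
Import Order.TTheory GRing.Theory Num.Theory.
Import numFieldNormedType.Exports.
Local Open Scope classical_set_scope.
Local Open Scope ring_scope.

Section Defs.
Variable R : realType.

Definition lipschitz_quadrant (f : R -> R -> R) : Prop :=
  exists L : R, forall x y x' y' : R, 0 <= x -> 0 <= y -> 0 <= x' -> 0 <= y' ->
    `|f x y - f x' y'| <= L * (`|x - x'| + `|y - y'|).

(* Standing assumptions (A1)-(A5) on f : [0,oo)^2 -> [0,oo), with d1 given;
   r1 := f 0 0 and lambda1 := r1 - d1. *)
Definition assumptions_f (f : R -> R -> R) (d1 : R) : Prop :=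
  [/\ (forall x y, 0 <= x -> 0 <= y -> 0 <= f x y) /\
      lipschitz_quadrant f,
      (forall x y, 0 <= x -> 0 <= y -> x + y = 0 -> f x y = f 0 0)
                 /\ (forall x y, 0 <= x -> 0 <= y -> x + y = 1 -> f x y = d1)
                 /\ d1 < f 0 0,
      (exists Phi : R -> R,
                   (forall s t, 0 <= s -> s <= t -> Phi t <= Phi s) /\
                   (forall x y, 0 <= x -> 0 <= y -> f x y = Phi (x + y))),
      (forall y, 0 <= y -> (fun x => f x y) @ +oo --> (0 : R))
                 /\ (forall x, 0 <= x -> (fun y => f x y) @ +oo --> (0 : R))
    & (forall x y, 0 <= x -> 0 <= y ->
                   (f 0 0 - d1) * (1 - (x + y)) + d1 <= f x y)].

Definition is_solution (lambda0 d1 alpha : R) (f : R -> R -> R) (n : nat)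
    (a0 a1 ab : R) (y0 y1 yb : R -> R) : Prop :=
  let phi := fun x y => f x y - d1 in
  [/\ y0 0 = a0, y1 0 = a1, yb 0 = ab,
      y0 x @[x --> 0^'+] --> y0 0 /\ y1 x @[x --> 0^'+] --> y1 0 /\
        yb x @[x --> 0^'+] --> yb 0
    & forall t : R, 0 < t ->
      [/\ is_derive t 1 y0 (lambda0 * y0 t),
          is_derive t 1 y1 (phi (y0 t) (y1 t) * y1 t
                            + (n%:R `^ (- alpha)) * y0 t)
        & is_derive t 1 yb (phi (y0 t) (y1 t) * yb t)]].

(* zeta := inf {t > 0 : y1 t = c}, as an extended real (+oo if the set is empty). *)
Definition recurrence_time (y1 : R -> R) (c : R) : \bar R :=
  ereal_inf [set t%:E | t in [set t : R | 0 < t /\ y1 t = c]].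

End Defs.

From HB Require Import structures.
From mathcomp Require Import all_boot all_order all_algebra.
From mathcomp Require Import all_classical all_reals all_analysis.
From mathcomp Require Import ring lra.
Set Implicit Arguments.
Unset Strict Implicit.
Unset Printing Implicit Defensive.
Import Order.TTheory GRing.Theory Num.Theory.
Import numFieldNormedType.Exports.
Local Open Scope classical_set_scope.
Local Open Scope ring_scope.

(* While y1 < a = 1/k, assumption (A5) keeps the per-capita growth rate f - d1 of
   y1 above lam1 (1 - y0 - y1), and y0 = a e^{lam0 t} decays exponentially.  After a
   fixed time t0 the function
     W = ln y1 + 2/(1-a) y1 + (lam1 a / lam0) e^{lam0 t}
   therefore grows at rate at least lam1, so y1 reaches a within time
   (ln a - ln y1(t0) + O(1)) / lam1 after t0.  Before t0, y1 e^{d1 t} grows at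
   least like y1(0) + n^{-alpha} y0(t0) t, so ln y1(t0) >= -min(1-beta, alpha) ln n - O(1). *)

Lemma ler_min_max (R : realDomainType) (p q l u v : R) :
  - Num.min p q * l + Num.min u v <= Num.max (- p * l + u) (- q * l + v).
Proof.
rewrite le_max; case: (leP p q) => _; apply/orP; [left|right].
- by rewrite lerD2l ge_min lexx.
- by rewrite lerD2l ge_min lexx orbT.
Qed.

Section real_calculus.
Context {R : realType}.
Implicit Types (g D : R -> R) (a b c s t : R).

Lemma is_derive_continuous g s c : is_derive s 1 g c -> {for s, continuous g}.
Proof. by move=> [gd _]; apply/differentiable_continuous/derivable1_diffP. Qed.

Lemma is_derive_within_continuous g D a b :
  (forall t, a <= t <= b -> is_derive t 1 g (D t)) ->
  {within `[a, b], continuous g}.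
Proof.
by move=> gD; apply: derivable_within_continuous => t; rewrite in_itv => /gD [].
Qed.

Lemma MVT_ler g D a b c : a < b ->
  (forall t, a <= t <= b -> is_derive t 1 g (D t)) ->
  (forall t, a < t < b -> c <= D t) -> c * (b - a) <= g b - g a.
Proof.
move=> ab gD Dc.
have gD' t : t \in `]a, b[ -> is_derive t 1 g (D t).
  by move=> tab; apply: gD; rewrite !ltW ?(itvP tab).
have [t tab ->] := MVT ab gD' (is_derive_within_continuous gD).
apply: ler_wpM2r; first by rewrite subr_ge0 ltW.
by apply: Dc; move: tab; rewrite in_itv.
Qed.

Lemma is_derive_gt0_left g s c : is_derive s 1 g c -> 0 < c ->
  \forall t \near s^'-, g t < g s.
Proof.
move=> [gd gc] c_gt0.
have : (fun h => h^-1 *: ((g \o shift s) (h *: 1) - g s)) @ 0^' --> c.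
  by rewrite -gc; exact: gd.
move=> /cvgrPdist_lt /(_ c c_gt0) /nbhs_ballP [d d_gt0 gdq].
near=> t.
have ts : t - s < 0 by rewrite subr_lt0; near: t; exact: nbhs_left_lt.
have : `|c - (t - s)^-1 *: ((g \o shift s) ((t - s) *: 1) - g s)| < c.
  apply: gdq; last by rewrite subr_eq0 lt_eqF // -subr_lt0.
  rewrite /ball /= sub0r normrN ltr0_norm // opprB.
  by near: t; exact: nbhs_left_ltBl.
rewrite /= scaler1 subrK => /ltr_normlP [_].
rewrite ltrBlDl ltrDr /GRing.scale /= => q_gt0.
by rewrite -subr_lt0 -(nmulr_rgt0 _ (_ : (t - s)^-1 < 0)) ?invr_lt0.
Unshelve. all: by end_near.
Qed.

Lemma is_derive_lt0_left g s c : is_derive s 1 g c -> g s <= 0 ->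
  (g s = 0 -> 0 < c) -> \forall t \near s^'-, g t < 0.
Proof.
move=> gs; rewrite le_eqVlt => /orP[/eqP gs0 c_gt0|gs_lt0 _].
  by rewrite -gs0; apply: is_derive_gt0_left gs (c_gt0 gs0).
exact: cvgr_lt (cvg_at_left_filter (is_derive_continuous gs)) _ gs_lt0.
Qed.

Lemma derive_gt0_at_roots_gt0 g D a b :
  (forall t, a <= t <= b -> is_derive t 1 g (D t)) -> 0 < g a ->
  (forall t, a < t <= b -> g t = 0 -> 0 < D t) ->
  forall t, a <= t <= b -> 0 < g t.
Proof.
(* At the first zero s of g in [a, t1], g > 0 on [a, s[ whereas g s = 0 and
   D s > 0 force g < 0 just left of s. *)
move=> gD ga_gt0 Droot t1 /andP[at1 t1b]; rewrite ltNge; apply/negP => gt1_le0.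
pose Z := [set u | a <= u <= t1 /\ g u <= 0].
have Zt1 : Z t1 by rewrite /Z /= at1 lexx.
have lbZ : lbound Z a by move=> u [/andP[]].
set s := inf Z.
have a_le_s : a <= s by apply: lb_le_inf => //; exists t1.
have s_le_t1 : s <= t1 by apply: ge_inf => //; exists a.
have gs : is_derive s 1 g (D s) by apply: gD; rewrite a_le_s (le_trans s_le_t1).
have g_pos v : a <= v < s -> 0 < g v.
  move=> /andP[av vs]; rewrite ltNge; apply/negP => gv_le0.
  have : s <= v.
    by apply: ge_inf; [exists a | split => //; rewrite av ltW // (lt_le_trans vs)].
  by rewrite leNgt vs.
have gs_le0 : g s <= 0.
  rewrite leNgt; apply/negP => gs_gt0.
  have /nbhs_ballP [d d_gt0 g_ball] : \forall u \near s, 0 < g u.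
    exact: cvgr_gt (is_derive_continuous gs) _ gs_gt0.
  have Zinf : has_inf Z by split; [exists t1 | exists a].
  have [z Zz zs] := inf_adherent d_gt0 Zinf.
  have sz : s <= z by apply: ge_inf => //; exists a.
  have [_ gz_le0] := Zz.
  have : 0 < g z.
    by apply: g_ball; rewrite /ball /= distrC ger0_norm ?subr_ge0 // ltrBlDl.
  by rewrite ltNge gz_le0.
have a_lt_s : a < s.
  by rewrite lt_neqAle a_le_s andbT; apply: contraTneq gs_le0 => <-; rewrite -ltNge.
have g_neg : \forall v \near s^'-, g v < 0.
  apply: is_derive_lt0_left gs gs_le0 _ => gs0.
  by apply: Droot; rewrite ?a_lt_s ?(le_trans s_le_t1).
have [v [av vs gv_lt0]] : exists v, [/\ a < v, v < s & g v < 0].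
  near s^'- => v; exists v; split; near: v.
  - exact: nbhs_left_gt.
  - exact: nbhs_left_lt.
  - exact: g_neg.
by have := g_pos v; rewrite (ltW av) vs ltNge (ltW gv_lt0) => /(_ isT).
Unshelve. all: by end_near.
Qed.

Lemma linear_ode_expR (l : R) (y : R -> R) :
  (forall t, 0 < t -> is_derive t 1 y (l * y t)) ->
  y x @[x --> 0^'+] --> y 0 ->
  forall t, 0 < t -> y t = y 0 * expR (l * t).
Proof.
move=> yD y_cvg0 t t_gt0.
pose g s := y s * expR (- l * s).
have gD s : 0 < s -> is_derive s 1 g 0.
  move=> /yD ?; apply: is_derive_eq.
  by rewrite /GRing.scale /= mulr1; ring.
have g_cst s : 0 < s < t -> g s = g t.
  move=> /andP[s_gt0 st]; apply/eqP; rewrite eq_sym -subr_eq0.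
  have gD' u : u \in `]s, t[ -> is_derive u 1 g 0.
    by move=> us; apply: gD; rewrite (lt_trans s_gt0) ?(itvP us).
  have g_cont : {within `[s, t], continuous g}.
    apply: (is_derive_within_continuous (D := fun=> 0)) => u /andP[su _].
    exact/gD/(lt_le_trans s_gt0 su).
  by have [u _ ->] := MVT st gD' g_cont; rewrite mul0r.
have g_cvg0 : g s @[s --> 0^'+] --> y 0.
  have -> : y 0 = y 0 * expR (- l * 0) by rewrite mulr0 expR0 mulr1.
  apply: cvgM => //; apply: cvg_at_right_filter.
  have eD : is_derive (0 : R) 1 (fun s => expR (- l * s)) (expR (- l * 0) * (- l)%:A).
    by typeclasses eauto.
  exact: is_derive_continuous eD.
have g_near0 : \forall s \near 0^'+, g s = g t.
  near=> s; apply: g_cst; apply/andP; split; near: s.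
  - exact: nbhs_right_gt.
  - exact: nbhs_right_lt.
have -> : y 0 = g t.
  apply/eqP; rewrite eq_le; apply/andP; split.
  - by apply: (cvgr_to_le g_cvg0); apply: filterS g_near0 => s ->.
  - by apply: (cvgr_to_ge g_cvg0); apply: filterS g_near0 => s ->.
by rewrite /g -mulrA -expRD mulNr addNr expR0 mulr1.
Unshelve. all: by end_near.
Qed.

Lemma expR_lin_le (l e : R) : l < 0 -> 0 < e -> exists2 t, 0 < t & expR (l * t) <= e.
Proof.
move=> l_lt0 e_gt0; exists (`|ln e| / - l + 1).
  by rewrite ltr_wpDl // divr_ge0 // oppr_ge0 ltW.
have -> : l * (`|ln e| / - l + 1) = - `|ln e| + l.
  by field; rewrite lt_eqF.
rewrite -[leRHS]lnK ?posrE // ler_expR.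
have : - `|ln e| <= ln e by rewrite lerNnormlW.
lra.
Qed.

Lemma initial_datum (n k beta : R) : 1 < n -> 0 < k -> beta < 1 ->
  [/\ n / (k * n) = k^-1, 0 < n `^ beta / (k * n), n `^ beta / (k * n) < k^-1
    & ln (n `^ beta / (k * n)) = - (1 - beta) * ln n + ln k^-1].
Proof.
move=> n_gt1 k_gt0 be_lt1; have n_gt0 := lt_trans ltr01 n_gt1.
have y_gt0 : 0 < n `^ beta / (k * n) by rewrite divr_gt0 ?powR_gt0 ?mulr_gt0.
have ln_y : ln (n `^ beta / (k * n)) = - (1 - beta) * ln n + ln k^-1.
  rewrite ln_div ?posrE ?powR_gt0 ?mulr_gt0 // lnM ?posrE // ln_powR lnV ?posrE //.
  ring.
split => //; first by rewrite invfM mulrCA mulfV ?mulr1 ?gt_eqF.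
rewrite -ltr_ln ?posrE ?invr_gt0 // ln_y.
have : 0 < (1 - beta) * ln n by rewrite mulr_gt0 ?subr_gt0 ?ln_gt0.
lra.
Qed.

End real_calculus.

Lemma is_solution_y0 (R : realType) lam0 d1 alpha (f : R -> R -> R) n
    a0 a1 ab (y0 y1 yb : R -> R) :
  is_solution lam0 d1 alpha f n a0 a1 ab y0 y1 yb ->
  forall t, 0 < t -> y0 t = a0 * expR (lam0 * t).
Proof.
move=> [<- _ _ [y0_cvg0 _] yD].
by apply: linear_ode_expR y0_cvg0 => t /yD [].
Qed.

(* Here [a] stands for the recurrence level 1/k and [P] for the immigration rate
   n^-alpha; lam1 enters only through the lower bound (A5) on f. *)
Section recurrence.
Context {R : realType}.
Variables (f : R -> R -> R) (d1 lam0 lam1 a P : R) (y0 y1 : R -> R).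
Hypothesis f_ge0 : forall x y : R, 0 <= x -> 0 <= y -> 0 <= f x y.
Hypothesis f_ge_affine : forall x y : R, 0 <= x -> 0 <= y ->
  lam1 * (1 - (x + y)) + d1 <= f x y.
Hypotheses (d1_ge0 : 0 <= d1) (lam0_lt0 : lam0 < 0) (lam1_gt0 : 0 < lam1).
Hypotheses (a_gt0 : 0 < a) (a_lt1 : a < 1) (P_gt0 : 0 < P).
Hypothesis y0E : forall t : R, 0 < t -> y0 t = a * expR (lam0 * t).
Hypotheses (y1_0_gt0 : 0 < y1 0) (y1_0_lt : y1 0 < a).
Hypothesis y1_cvg0 : y1 x @[x --> 0^'+] --> y1 0.
Hypothesis y1D : forall t : R, 0 < t ->
  is_derive t 1 y1 ((f (y0 t) (y1 t) - d1) * y1 t + P * y0 t).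

Lemma y0_gt0 t : 0 < t -> 0 < y0 t.
Proof. by move=> /y0E ->; rewrite mulr_gt0 ?expR_gt0. Qed.

Lemma y1_near0 t : 0 < t -> exists s, [/\ 0 < s, s < t, 0 < y1 s & y1 s < a].
Proof.
move=> t_gt0; near (0 : R)^'+ => s; exists s; split; near: s.
- exact: nbhs_right_gt.
- exact: nbhs_right_lt.
- exact: cvgr_gt y1_cvg0 _ y1_0_gt0.
- exact: cvgr_lt y1_cvg0 _ y1_0_lt.
Unshelve. all: by end_near.
Qed.

Lemma y1_gt0 t : 0 < t -> 0 < y1 t.
Proof.
move=> t_gt0; have [s [s_gt0 st ys_gt0 _]] := y1_near0 t_gt0.
pose D u := (f (y0 u) (y1 u) - d1) * y1 u + P * y0 u.
apply: (derive_gt0_at_roots_gt0 (D := D) (a := s) (b := t)) => //.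
- by move=> u /andP[su _]; apply: y1D; exact: lt_le_trans su.
- move=> u /andP[su _] y1u0; rewrite /D y1u0 mulr0 add0r mulr_gt0 // y0_gt0 //.
  exact: lt_trans su.
- by rewrite (ltW st) lexx.
Qed.

Lemma y1_weighted_incr s t : 0 < s < t ->
  expR (d1 * s) * y1 s + P * (a * expR (lam0 * t)) * (t - s)
    <= expR (d1 * t) * y1 t.
Proof.
(* As f >= 0 and y0 decreases, (e^{d1 u} y1 u)' >= P y0 u >= P y0 t on [s, t]. *)
move=> /andP[s_gt0 st]; set b := a * expR (lam0 * t).
pose G u := expR (d1 * u) * y1 u - P * b * u.
pose DG u := expR (d1 * u) * ((f (y0 u) (y1 u) - d1) * y1 u + P * y0 u)
  + y1 u * (expR (d1 * u) * d1) - P * b.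
suff : 0 * (t - s) <= G t - G s by rewrite mul0r subr_ge0 /G; lra.
apply: (MVT_ler (D := DG)) => // [u /andP[su _]|u /andP[su ut]].
  have := y1D (lt_le_trans s_gt0 su) => ?.
  by apply: is_derive_eq; rewrite /GRing.scale /= !mulr1 /DG; ring.
have u_gt0 := lt_trans s_gt0 su.
have e_ge1 : 1 <= expR (d1 * u) by rewrite -expR0 ler_expR mulr_ge0 // ltW.
have y0u_ge0 := ltW (y0_gt0 u_gt0); have y1u_ge0 := ltW (y1_gt0 u_gt0).
have b_le : b <= y0 u by rewrite y0E // ler_pM2l // ler_expR ler_wnM2l // ltW.
have -> : DG u = expR (d1 * u) * (f (y0 u) (y1 u) * y1 u)
    + P * (expR (d1 * u) * y0 u - b) by rewrite /DG; ring.
apply: addr_ge0; first by rewrite !mulr_ge0 ?expR_ge0 ?f_ge0.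
apply: mulr_ge0; first exact: ltW.
by rewrite subr_ge0 (le_trans b_le) // ler_peMl.
Qed.

Lemma y1_growth t : 0 < t ->
  y1 0 + P * (a * expR (lam0 * t)) * t <= expR (d1 * t) * y1 t.
Proof.
move=> t_gt0; set X := P * (a * expR (lam0 * t)).
have cvg_lhs : expR (d1 * s) * y1 s + X * (t - s) @[s --> 0^'+]
    --> expR (d1 * 0) * y1 0 + X * (t - 0).
  apply: cvgD; first apply: cvgM => //; apply: cvg_at_right_filter.
  - have eD : is_derive (0 : R) 1 (fun s => expR (d1 * s)) (expR (d1 * 0) * d1%:A).
      by typeclasses eauto.
    exact: is_derive_continuous eD.
  - by apply: cvgM; [exact: cvg_cst | apply: cvgB; [exact: cvg_cst | exact: cvg_id]].
rewrite mulr0 expR0 mul1r subr0 in cvg_lhs.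
apply: (cvgr_to_le cvg_lhs); near=> s; apply: y1_weighted_incr.
apply/andP; split; near: s; [exact: nbhs_right_gt | exact: nbhs_right_lt].
Unshelve. all: by end_near.
Qed.

Lemma ln_y1_ge t : 0 < t ->
  Num.max (ln (y1 0)) (ln P + ln (a * expR (lam0 * t) * t)) - d1 * t
    <= ln (y1 t).
Proof.
move=> t_gt0; have X_gt0 : 0 < P * (a * expR (lam0 * t)) * t.
  by rewrite !mulr_gt0 ?expR_gt0.
have -> : ln P + ln (a * expR (lam0 * t) * t) = ln (P * (a * expR (lam0 * t)) * t).
  by rewrite -lnM ?posrE ?mulrA // !mulr_gt0 ?expR_gt0.
have growth := y1_growth t_gt0.
have -> : ln (y1 t) = ln (expR (d1 * t) * y1 t) - d1 * t.
  by rewrite lnM ?posrE ?expR_gt0 ?y1_gt0 // expRK addrAC subrr add0r.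
have Y_gt0 : 0 < expR (d1 * t) * y1 t by rewrite mulr_gt0 ?expR_gt0 ?y1_gt0.
rewrite lerD2r ge_max !ler_ln ?posrE //.
by apply/andP; split; apply: le_trans growth; rewrite ?lerDl ?lerDr ltW.
Qed.

Lemma y1_lt_before_hit T : ~ (exists t, 0 < t <= T /\ y1 t = a) ->
  forall t, 0 < t <= T -> y1 t < a.
Proof.
move=> no_hit t /andP[t_gt0 tT]; rewrite ltNge; apply/negP => a_le.
have [s [s_gt0 st _ ys_lt]] := y1_near0 t_gt0.
have y1_cont : {within `[s, t], continuous y1}.
  apply: is_derive_within_continuous => u /andP[su _].
  by apply: y1D; exact: lt_le_trans su.
have [|u u_in y1u] := IVT (ltW st) y1_cont (v := a).
  by rewrite ge_min (ltW ys_lt) le_max a_le orbT.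
apply: no_hit; exists u; split => //.
by rewrite (lt_le_trans s_gt0) ?(le_trans _ tT) ?(itvP u_in).
Qed.

(* While y0 <= (1-a)/2 and y1 < a, (A5) gives f - d1 >= lam1 (1-a)/2, hence
   2/(1-a) (f - d1) y1 >= lam1 y1; adding lam1 (1 - y0 - y1) <= f - d1 and the
   lam1 y0 coming from the last term shows that the derivative is at least lam1. *)
Let lyapunov t := ln (y1 t) + 2 / (1 - a) * y1 t + lam1 * a / lam0 * expR (lam0 * t).

Lemma lyapunov_increment s t : 0 < s < t -> expR (lam0 * s) <= (1 - a) / 2 ->
  (forall u, s < u < t -> y1 u < a) -> lam1 * (t - s) <= lyapunov t - lyapunov s.
Proof.
move=> /andP[s_gt0 st] decayed y1_lt.
pose D1 u := (f (y0 u) (y1 u) - d1) * y1 u + P * y0 u.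
pose DW u := (y1 u)^-1 * D1 u + 2 / (1 - a) * D1 u
  + lam1 * a / lam0 * (expR (lam0 * u) * lam0).
apply: (MVT_ler (D := DW)) => // [u /andP[su _]|u /andP[su ut]].
  have u_gt0 := lt_le_trans s_gt0 su.
  have := y1D u_gt0 => ?.
  have := is_derive1_comp (is_derive1_ln (y1_gt0 u_gt0)) (y1D u_gt0) => ?.
  by apply: is_derive_eq; rewrite /GRing.scale /= !mulr1 /DW /D1; ring.
have u_gt0 := lt_trans s_gt0 su.
have x_gt0 := y0_gt0 u_gt0; have y_gt0 := y1_gt0 u_gt0.
have y_lt : y1 u < a by apply: y1_lt; rewrite su.
have x_small : y0 u <= (1 - a) / 2.
  rewrite y0E // (le_trans _ decayed) // -[leRHS]mul1r.
  apply: ler_pM; [exact: ltW | exact: expR_ge0 | exact: ltW |].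
  by rewrite ler_expR ler_wnM2l // ltW.
set x := y0 u in x_gt0 x_small *; set y := y1 u in y_gt0 y_lt *.
set F := f x y - d1.
have F_ge : lam1 * (1 - (x + y)) <= F by rewrite lerBrDr f_ge_affine ?ltW.
have F_y_ge : lam1 * y <= 2 / (1 - a) * F * y.
  have a1_gt0 : 0 < 1 - a by rewrite subr_gt0.
  have -> : lam1 = 2 / (1 - a) * (lam1 * (1 - a) / 2) by field; rewrite gt_eqF.
  rewrite ler_pM2r // ler_pM2l ?divr_gt0 // (le_trans _ F_ge) //.
  by rewrite -mulrA ler_pM2l //; lra.
have -> : DW u = F + P * x / y + 2 / (1 - a) * F * y
    + 2 / (1 - a) * (P * x) + lam1 * x.
  rewrite /DW /D1 -/x -/y -/F [x](y0E u_gt0); field.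
  by rewrite gt_eqF ?subr_gt0 //= gt_eqF //= lt_eqF.
have : 0 <= P * x / y by rewrite divr_ge0 ?mulr_ge0 ?ltW.
have : 0 <= 2 / (1 - a) * (P * x).
  by rewrite !mulr_ge0 ?invr_ge0 ?subr_ge0 ?ltW.
lra.
Qed.

Lemma y1_hits t0 T : 0 < t0 < T -> expR (lam0 * t0) <= (1 - a) / 2 ->
  ln a + 2 * a / (1 - a) - lam1 * a / lam0 - ln (y1 t0) < lam1 * (T - t0) ->
  exists t, 0 < t <= T /\ y1 t = a.
Proof.
move=> /andP[t0_gt0 t0T] decayed gap.
have [//|no_hit] := pselect (exists t, 0 < t <= T /\ y1 t = a).
have y1_lt := y1_lt_before_hit no_hit.
have T_gt0 := lt_trans t0_gt0 t0T.
have W_incr : lam1 * (T - t0) <= lyapunov T - lyapunov t0.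
  apply: lyapunov_increment => //; first by rewrite t0_gt0.
  by move=> u /andP[t0u uT]; apply: y1_lt; rewrite (lt_trans t0_gt0 t0u) ltW.
have a1_gt0 : 0 < 1 - a by rewrite subr_gt0.
have q_lt0 : lam1 * a / lam0 < 0 by rewrite nmulr_llt0 ?invr_lt0 ?mulr_gt0.
have WT : lyapunov T <= ln a + 2 * a / (1 - a).
  have yT_lt : y1 T < a by apply: y1_lt; rewrite T_gt0 lexx.
  have : ln (y1 T) <= ln a by rewrite ler_ln ?posrE ?y1_gt0 // ltW.
  have : 2 / (1 - a) * y1 T <= 2 * a / (1 - a).
    by rewrite [leRHS]mulrAC ler_pM2l ?divr_gt0 // ltW.
  have : lam1 * a / lam0 * expR (lam0 * T) <= 0.
    by rewrite nmulr_rle0 ?expR_ge0.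
  rewrite /lyapunov; lra.
have Wt0 : ln (y1 t0) + lam1 * a / lam0 <= lyapunov t0.
  have : 0 <= 2 / (1 - a) * y1 t0 by rewrite mulr_ge0 ?divr_ge0 ?ltW ?y1_gt0.
  have : lam1 * a / lam0 <= lam1 * a / lam0 * expR (lam0 * t0).
    by rewrite ler_nMr // expR_le1 nmulr_rle0 // ltW.
  rewrite /lyapunov; lra.
lra.
Qed.

Lemma recurrence_time_le t0 K : 0 < t0 -> expR (lam0 * t0) <= (1 - a) / 2 ->
  0 < K ->
  ln a + 2 * a / (1 - a) - lam1 * a / lam0 + d1 * t0
    - Num.max (ln (y1 0)) (ln P + ln (a * expR (lam0 * t0) * t0)) < K ->
  (recurrence_time y1 a <= (t0 + K / lam1)%:E)%E.
Proof.
move=> t0_gt0 decayed K_gt0 gap.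
have t0_lt : 0 < t0 < t0 + K / lam1 by rewrite t0_gt0 ltrDl divr_gt0.
have [|t [/andP[t_gt0 tT] y1t]] := y1_hits t0_lt decayed.
  have -> : lam1 * (t0 + K / lam1 - t0) = K by field; rewrite gt_eqF.
  by have := ln_y1_ge t0_gt0; lra.
apply: le_trans (ereal_inf_lbound _) _; first by exists t.
by rewrite lee_fin.
Qed.

End recurrence.

Theorem lemmaA1 (R : realType) (r0 d0 d1 k alpha beta : R) (f : R -> R -> R) :
  0 <= r0 -> 0 <= d0 -> r0 - d0 < 0 -> 0 < d1 -> 1 < k ->
  0 < alpha < 1 -> 0 < beta < 1 ->
  assumptions_f f d1 ->
  exists C : R, 0 < C /\
  exists N : nat, forall n : nat, (N <= n)%N ->
    forall y0 y1 yb : R -> R,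
      is_solution (r0 - d0) d1 alpha f n
        (n%:R / (k * n%:R)) (n%:R `^ beta / (k * n%:R)) (n%:R `^ beta / (k * n%:R))
        y0 y1 yb ->
      (recurrence_time y1 (n%:R / (k * n%:R))
        < (C + Num.min (1 - beta) alpha / (f 0 0 - d1) * ln (n%:R : R))%:E)%E.
Proof.
move=> _ _ lam0_lt0 d1_gt0 k_gt1 /andP[al_gt0 al_lt1] /andP[be_gt0 be_lt1].
move=> [[f_ge0 _] [_ [_ d1_lt]] _ _ f_ge_affine].
set lam0 := r0 - d0 in lam0_lt0 *; set lam1 := f 0 0 - d1 in f_ge_affine *.
have lam1_gt0 : 0 < lam1 by rewrite subr_gt0.
have k_gt0 : 0 < k := lt_trans ltr01 k_gt1.
set a := k^-1; have a_gt0 : 0 < a by rewrite invr_gt0.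
have a_lt1 : a < 1 by rewrite invf_lt1.
have [t0 t0_gt0 decayed] : exists2 t0, 0 < t0 & expR (lam0 * t0) <= (1 - a) / 2.
  by apply: expR_lin_le; rewrite // divr_gt0 // subr_gt0.
set L := Num.min (ln a) (ln (a * expR (lam0 * t0) * t0)).
set K := `|ln a + 2 * a / (1 - a) - lam1 * a / lam0 + d1 * t0 - L| + 1.
have K_gt0 : 0 < K by rewrite ltr_pwDr.
exists (t0 + K / lam1 + 1); split; first by rewrite !addr_gt0 ?divr_gt0.
exists 2%N => n n_ge2 y0 y1 yb sol; set nR := n%:R.
have n_gt1 : 1 < nR by rewrite ltr1n.
have ln_n_gt0 : 0 < ln nR by rewrite ln_gt0.
have [n_k y1_0_gt0 y1_0_lt ln_y1_0] := initial_datum n_gt1 k_gt0 be_lt1.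
have y0E := is_solution_y0 sol; rewrite n_k in y0E *.
have [_ y1_0 _ [_ [y1_cvg0 _]] yD] := sol; rewrite -y1_0 in y1_0_gt0 y1_0_lt ln_y1_0.
set P := nR `^ (- alpha); have P_gt0 : 0 < P by rewrite powR_gt0 // (lt_trans ltr01).
have y1D (t : R) : 0 < t -> is_derive t 1 y1 ((f (y0 t) (y1 t) - d1) * y1 t + P * y0 t).
  by move=> /yD [].
set m := Num.min (1 - beta) alpha.
apply: le_lt_trans (recurrence_time_le f_ge0 f_ge_affine (ltW d1_gt0) lam0_lt0
  lam1_gt0 a_gt0 a_lt1 P_gt0 y0E y1_0_gt0 y1_0_lt y1_cvg0 y1D
  (K := m * ln nR + K) t0_gt0 decayed _ _) _.
- by rewrite addr_gt0 // mulr_gt0 // lt_min subr_gt0 be_lt1 al_gt0.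
- have := ler_min_max (1 - beta) alpha (ln nR) (ln a) (ln (a * expR (lam0 * t0) * t0)).
  rewrite -ln_y1_0 -[- alpha * ln nR]ln_powR -/P -/m -/L.
  have := ler_norm (ln a + 2 * a / (1 - a) - lam1 * a / lam0 + d1 * t0 - L).
  rewrite /K; lra.
- by rewrite lte_fin mulrDl [m * ln nR / lam1]mulrAC; lra.
Qed.
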